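(* Let $\mathcal P$ be a Poisson $n$-Lie algebra. Then $\operatorname{Nil}(\mathcal P)$ is contained in every maximal hypo-nilpotent ideal of $\mathcal P$.
   Context: A Poisson $n$-Lie algebra is a commutative associative algebra $(\mathcal P,\cdot)$ with an $n$-linear skew-symmetric bracket satisfying the fundamental identity $[x_1,\dots,x_{n-1},[y_1,\dots,y_n]]=\sum_{i=1}^n[y_1,\dots,[x_1,\dots,x_{n-1},y_i],\dots,y_n]$ and the Leibniz rule $[y\cdot z,x_2,\dots,x_n]=y\cdot[z,x_2,\dots,x_n]+z\cdot[y,x_2,\dots,x_n]$. Products/brackets of subspaces are linear spans. For an ideal $\mathcal I$ (subspace with $\mathcal P\cdot\mathcal I\subseteq\mathcal I$, $[\mathcal I,\mathcal P,\dots,\mathcal P]\subseteq\mathcal I$): $\mathcal I^1=\mathcal I$, $\mathcal I^{k+1}=[\mathcal I^k,\mathcal I,\mathcal P,\dots,\mathcal P]+\mathcal I^k\cdot\mathcal I$, and $\mathcal I^{[1]}=\mathcal I$, $\mathcal I^{[k+1]}=[\mathcal I^{[k]},\mathcal I,\dots,\mathcal I]+\mathcal I^{[k]}\cdot\mathcal I$. $\mathcal I$ is a nilpotent ideal if $\mathcal I^s=0$ for some $s$, and nilpotent as a subalgebra if $\mathcal I^{[s]}=0$ for some $s$. $\operatorname{Nil}(\mathcal P)$ is the maximal nilpotent ideal of $\mathcal P$. A hypo-nilpotent ideal is an ideal that is nilpotent as a subalgebra but not nilpotent as an ideal; a maximal hypo-nilpotent ideal is one not properly contained in any other hypo-nilpotent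 ideal. *)

From HB Require Import structures.
From mathcomp Require Import all_boot all_order all_algebra.
From mathcomp Require Import fingroup perm.
Set Implicit Arguments. Unset Strict Implicit. Unset Printing Implicit Defensive.
Import GRing.Theory.
Local Open Scope ring_scope.

(* Subspaces (possibly infinite-dimensional) are represented as predicates
   V -> Prop on an F-vector space V. Arguments of the n-ary bracket are
   finite functions {ffun 'I_n -> V}; slot k (0-based) is the k-th argument. *)

Section PoissonNLie.
Variables (F : fieldType) (V : lmodType F) (n : nat).
Variables (mul : V -> V -> V) (br : {ffun 'I_n -> V} -> V).

Definition updn (f : {ffun 'I_n -> V}) (k : nat) (v : V) : {ffun 'I_n -> V} :=
  [ffun i : 'I_n => if val i == k then v else f i].

Definition poisson_nlie : Prop :=
  (forall (a : F) (x y z : V), mul (a *: x + y) z = a *: mul x z + mul y z) /\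
      (forall x y : V, mul x y = mul y x) /\
      (forall x y z : V, mul x (mul y z) = mul (mul x y) z) /\
      (forall (f : {ffun 'I_n -> V}) (i : 'I_n) (a : F) (u v : V),
         br (updn f i (a *: u + v)) = a *: br (updn f i u) + br (updn f i v)) /\
      (forall (f : {ffun 'I_n -> V}) (i j : 'I_n), i != j ->
         br [ffun k => f (tperm i j k)] = - br f) /\
      (forall x y : {ffun 'I_n -> V},
         br (updn x n.-1 (br y)) =
         \sum_(i < n) br (updn y i (br (updn x n.-1 (y i))))) /\
      (forall (x : {ffun 'I_n -> V}) (y z : V),
         br (updn x 0 (mul y z)) =
         mul y (br (updn x 0 z)) + mul z (br (updn x 0 y))).

Definition subS (S T : V -> Prop) : Prop := forall v, S v -> T v.
Definition fullset : V -> Prop := fun _ => True.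
Definition is_zero (S : V -> Prop) : Prop := forall v, S v <-> v = 0.

Definition subspace (S : V -> Prop) : Prop :=
  S 0 /\ forall (a : F) (u v : V), S u -> S v -> S (a *: u + v).

Definition span (G : V -> Prop) : V -> Prop :=
  fun v => forall W, subspace W -> subS G W -> W v.

Definition prodS (A B : V -> Prop) : V -> Prop :=
  span (fun v => exists a b, [/\ A a, B b & v = mul a b]).

Definition brS (S : nat -> V -> Prop) : V -> Prop :=
  span (fun v => exists f : {ffun 'I_n -> V},
                   (forall i : 'I_n, S (val i) (f i)) /\ v = br f).

Definition sumS (A B : V -> Prop) : V -> Prop :=
  fun v => exists a b, [/\ A a, B b & v = a + b].

Definition ideal (I : V -> Prop) : Prop :=
  [/\ subspace I,
      subS (prodS fullset I) I &
      subS (brS (fun k => if k == 0%N then I else fullset)) I].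

(* powI I k = I^(k+1) :  I^1 = I,
   I^{k+1} = [I^k, I, P, ..., P] + I^k . I *)
Fixpoint powI (I : V -> Prop) (k : nat) : V -> Prop :=
  match k with
  | 0 => I
  | k'.+1 =>
      sumS (brS (fun j => if j == 0%N then powI I k'
                          else if j == 1%N then I else fullset))
           (prodS (powI I k') I)
  end.

(* powD I k = I^[k+1] :  I^[1] = I,
   I^[k+1] = [I^[k], I, ..., I] + I^[k] . I *)
Fixpoint powD (I : V -> Prop) (k : nat) : V -> Prop :=
  match k with
  | 0 => I
  | k'.+1 =>
      sumS (brS (fun j => if j == 0%N then powD I k' else I))
           (prodS (powD I k') I)
  end.

Definition nilpotent_ideal (I : V -> Prop) : Prop :=
  ideal I /\ exists s, is_zero (powI I s).

Definition nilpotent_subalgebra (I : V -> Prop) : Prop :=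
  exists s, is_zero (powD I s).

Definition is_Nil (N : V -> Prop) : Prop :=
  nilpotent_ideal N /\ forall K, nilpotent_ideal K -> subS K N.

Definition hypo_nilpotent (I : V -> Prop) : Prop :=
  [/\ ideal I, nilpotent_subalgebra I & ~ nilpotent_ideal I].

Definition max_hypo_nilpotent (I : V -> Prop) : Prop :=
  hypo_nilpotent I /\
  forall J, hypo_nilpotent J -> subS I J -> subS J I.

End PoissonNLie.

(* Let N be a nilpotent ideal and J a hypo-nilpotent ideal, with J^[t+1] = 0.
   Expanding brackets and products multilinearly, one derived step of N + J
   sends (N+J)^[m] into the pure J-part plus terms meeting N; if
   (N+J)^[m] lies in N^j, these terms lie in N^(j+1).  After t + 1 steps the
   J-part has died, so (N+J)^[m+t+1] lies in N^(j+1), and by induction some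
   (N+J)^[M] lies in N^s = 0.  Hence N + J is nilpotent as a subalgebra, but
   not as an ideal (else so would be J): it is hypo-nilpotent, and
   maximality of J gives N + J = J. *)

From Pilot Require Import Defs.
From HB Require Import structures.
From mathcomp Require Import all_boot all_order all_algebra fingroup perm.
Set Implicit Arguments. Unset Strict Implicit. Unset Printing Implicit Defensive.
Import GRing.Theory.
Local Open Scope ring_scope.

Section Subspaces.
Variables (F : fieldType) (V : lmodType F).
Implicit Types (A B G S W : V -> Prop).

Lemma subspace0 S : subspace S -> S 0.
Proof. by case. Qed.

Lemma subspaceD S u v : subspace S -> S u -> S v -> S (u + v).
Proof. by move=> [_ SZD] Su Sv; rewrite -[u]scale1r; apply: SZD. Qed.

Lemma subspaceN S u : subspace S -> S u -> S (- u).
Proof. by move=> [S0 SZD] Su; rewrite -[- u]addr0 -scaleN1r; apply: SZD. Qed.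

Lemma span_subspace G : subspace (Defs.span G).
Proof.
split=> [W [] // | a u v Gu Gv W sW GW].
by case: (sW) => _ SZD; apply: SZD; [apply: Gu | apply: Gv].
Qed.

Lemma sub_span G : subS G (Defs.span G).
Proof. by move=> v Gv W _; apply. Qed.

Lemma span_min G W : subspace W -> subS G W -> subS (Defs.span G) W.
Proof. by move=> sW GW v; apply. Qed.

Lemma sumS_subspace A B : subspace A -> subspace B -> subspace (sumS A B).
Proof.
move=> sA sB; split; first by exists 0, 0; rewrite addr0; split=> //; apply: subspace0.
move=> a _ _ [u1 [v1 [Au1 Bv1 ->]]] [u2 [v2 [Au2 Bv2 ->]]].
exists (a *: u1 + u2), (a *: v1 + v2); split; first by case: sA => _; apply.
  by case: sB => _; apply.
by rewrite scalerDr addrACA.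
Qed.

Lemma sumS_min A B W : subspace W -> subS A W -> subS B W -> subS (sumS A B) W.
Proof. by move=> sW AW BW _ [u [v [Au Bv ->]]]; apply: subspaceD; [|apply: AW|apply: BW]. Qed.

Lemma sumSl A B : subspace B -> subS A (sumS A B).
Proof. by move=> sB u Au; exists u, 0; rewrite addr0; split=> //; apply: subspace0. Qed.

Lemma sumSr A B : subspace A -> subS B (sumS A B).
Proof. by move=> sA v Bv; exists 0, v; rewrite add0r; split=> //; apply: subspace0. Qed.

Lemma sumS_mono A B A' B' : subS A A' -> subS B B' -> subS (sumS A B) (sumS A' B').
Proof. by move=> AA' BB' _ [u [v [Au Bv ->]]]; exists u, v; split; [apply: AA'|apply: BB'|]. Qed.

End Subspaces.

Section PoissonNLieAlgebra.
Variables (F : fieldType) (V : lmodType F) (n' : nat).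
Local Notation n := n'.+2.
Local Notation slot1 := (@Ordinal n 1 isT).
Variables (mul : V -> V -> V) (br : {ffun 'I_n -> V} -> V).
Hypothesis HP : poisson_nlie mul br.
Implicit Types (A B I J K L N X Y Z W : V -> Prop) (f g x : {ffun 'I_n -> V}).

Lemma pmul_linear a u v z : mul (a *: u + v) z = a *: mul u z + mul v z.
Proof. by have [+ _] := HP; apply. Qed.

Lemma pmulC u v : mul u v = mul v u.
Proof. by have [_ [+ _]] := HP; apply. Qed.

Lemma pmulA u v w : mul u (mul v w) = mul (mul u v) w.
Proof. by have [_ [_ [+ _]]] := HP; apply. Qed.

Lemma br_linear f (i : 'I_n) a u v :
  br (updn f i (a *: u + v)) = a *: br (updn f i u) + br (updn f i v).
Proof. by have [_ [_ [_ [+ _]]]] := HP; apply. Qed.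

Lemma br_skew f (i j : 'I_n) : i != j -> br [ffun k => f (tperm i j k)] = - br f.
Proof. by have [_ [_ [_ [_ [+ _]]]]] := HP; apply. Qed.

Lemma br_fundamental x y :
  br (updn x n.-1 (br y)) = \sum_(i < n) br (updn y i (br (updn x n.-1 (y i)))).
Proof. by have [_ [_ [_ [_ [_ [+ _]]]]]] := HP; apply. Qed.

Lemma br_leibniz x u v :
  br (updn x 0 (mul u v)) = mul u (br (updn x 0 v)) + mul v (br (updn x 0 u)).
Proof. by have [_ [_ [_ [_ [_ [_ +]]]]]] := HP; apply. Qed.

Lemma pmulDl u v z : mul (u + v) z = mul u z + mul v z.
Proof. by have := pmul_linear 1 u v z; rewrite !scale1r. Qed.

Lemma pmulDr u v z : mul z (u + v) = mul z u + mul z v.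
Proof. by rewrite pmulC pmulDl !(pmulC z). Qed.

Lemma brD f (i : 'I_n) u v : br (updn f i (u + v)) = br (updn f i u) + br (updn f i v).
Proof. by have := br_linear f i 1 u v; rewrite !scale1r. Qed.

Lemma br0 f (i : 'I_n) : br (updn f i 0) = 0.
Proof. by have := br_linear f i (-1) 0 0; rewrite scaler0 addr0 scaleN1r addNr. Qed.

Lemma updnE f k v (i : 'I_n) : updn f k v i = if val i == k then v else f i.
Proof. by rewrite ffunE. Qed.

Lemma updn_id f (i : 'I_n) : updn f i (f i) = f.
Proof. by apply/ffunP => k; rewrite updnE; case: eqP => // /val_inj ->. Qed.

Lemma updn_updn f k u v : updn (updn f k u) k v = updn f k v.
Proof. by apply/ffunP => i; rewrite !updnE; case: eqP. Qed.

Lemma br_swap f (i j : 'I_n) : i != j -> br (updn (updn f i (f j)) j (f i)) = - br f.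
Proof.
move=> nij; rewrite -(br_skew f nij); congr br; apply/ffunP => k.
rewrite !updnE ffunE !val_eqE.
by case: (tpermP i j k) => [->|->|/eqP/negbTE-> /eqP/negbTE->]; rewrite ?eqxx ?(negbTE nij).
Qed.

Lemma br_swap_first_last f v :
  br (updn f 0 v) = - br (updn (updn f 0 (f ord_max)) n.-1 v).
Proof.
have := @br_swap (updn f 0 v) ord0 ord_max isT.
by rewrite updn_updn !updnE /= => ->; rewrite opprK.
Qed.

Lemma subspace_br_preim W f (i : 'I_n) :
  subspace W -> subspace (fun u => W (br (updn f i u))).
Proof.
move=> [W0 WZD]; split=> [|a u v Wu Wv]; first by rewrite br0.
by rewrite br_linear; apply: WZD.
Qed.

Lemma subspace_pmul_preim W z : subspace W -> subspace (fun u => W (mul z u)).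
Proof.
move=> [W0 WZD]; split=> [|a u v Wu Wv].
  by have := pmul_linear (-1) 0 0 z; rewrite scaler0 addr0 scaleN1r addNr pmulC => ->.
by rewrite pmulC pmul_linear !(pmulC _ z); apply: WZD.
Qed.

Lemma brS_gen (S : nat -> V -> Prop) f : (forall i : 'I_n, S i (f i)) -> brS br S (br f).
Proof. by move=> Sf; apply: sub_span; exists f. Qed.

Lemma brS_min (S : nat -> V -> Prop) W : subspace W ->
  (forall f, (forall i : 'I_n, S i (f i)) -> W (br f)) -> subS (brS br S) W.
Proof. by move=> sW SW; apply: span_min => // _ [f [Sf ->]]; apply: SW. Qed.

Lemma brS_mono (S T : nat -> V -> Prop) :
  (forall k, subS (S k) (T k)) -> subS (brS br S) (brS br T).
Proof.
move=> ST; apply: brS_min; first exact: span_subspace.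
by move=> f Sf; apply: brS_gen => i; apply: ST.
Qed.

Lemma prodS_gen A B u v : A u -> B v -> prodS mul A B (mul u v).
Proof. by move=> Au Bv; apply: sub_span; exists u, v. Qed.

Lemma prodS_min A B W : subspace W ->
  (forall u v, A u -> B v -> W (mul u v)) -> subS (prodS mul A B) W.
Proof. by move=> sW ABW; apply: span_min => // _ [u [v [Au Bv ->]]]; apply: ABW. Qed.

Lemma prodS_mono A B A' B' : subS A A' -> subS B B' -> subS (prodS mul A B) (prodS mul A' B').
Proof.
move=> AA' BB'; apply: prodS_min; first exact: span_subspace.
by move=> u v Au Bv; apply: prodS_gen; [apply: AA' | apply: BB'].
Qed.

Lemma idealP I : subspace I -> (forall u v, I v -> I (mul u v)) ->
  (forall f, I (f ord0) -> I (br f)) -> ideal mul br I.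
Proof.
move=> sI Imul Ibr; split=> //; first by apply: prodS_min => // u v _; apply: Imul.
by apply: brS_min => // f If; apply: Ibr; apply: (If ord0).
Qed.

Lemma ideal_subspace I : ideal mul br I -> subspace I.
Proof. by case. Qed.

Lemma ideal_mull I u v : ideal mul br I -> I v -> I (mul u v).
Proof. by case=> _ Imul _ Iv; apply: Imul; apply: prodS_gen. Qed.

Lemma ideal_mulr I u v : ideal mul br I -> I u -> I (mul u v).
Proof. by rewrite pmulC; apply: ideal_mull. Qed.

Lemma ideal_br I f (i : 'I_n) : ideal mul br I -> I (f i) -> I (br f).
Proof.
case=> sI _ Ibr Ifi.
have Ibr0 g : I (g ord0) -> I (br g).
  move=> Ig0; apply: Ibr; apply: brS_gen => k.
  by case: ifP => [/eqP k0 | //]; rewrite (_ : k = ord0) //; apply: val_inj.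
case: (eqVneq i ord0) Ifi => [-> | ni0 Ifi]; first exact: Ibr0.
rewrite -[br f]opprK -(br_swap f ni0); apply: subspaceN => //.
by apply: Ibr0; rewrite updnE eqxx.
Qed.

Lemma ideal_updn_br I g x (i k : 'I_n) :
  ideal mul br I -> I (g k) -> I (updn g i (br (updn x n.-1 (g i))) k).
Proof.
move=> hI Igk; rewrite updnE; case: eqP => [/val_inj <- | _] //.
by apply: (@ideal_br I _ ord_max); rewrite // updnE eqxx.
Qed.

Lemma sumS_ideal N J : ideal mul br N -> ideal mul br J -> ideal mul br (sumS N J).
Proof.
move=> hN hJ; apply: idealP; first by apply: sumS_subspace; apply: ideal_subspace.
  move=> u _ [a [b [Na Jb ->]]]; exists (mul u a), (mul u b).
  by rewrite pmulDr; split=> //; [apply: (ideal_mull _ hN) | apply: (ideal_mull _ hJ)].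
move=> f [a [b [Na Jb e]]]; rewrite -(updn_id f ord0) e brD.
exists (br (updn f 0 a)), (br (updn f 0 b)); split=> //.
  by apply: (@ideal_br N _ ord0); rewrite ?updnE.
by apply: (@ideal_br J _ ord0); rewrite ?updnE.
Qed.

Lemma powI_subspace I k : subspace I -> subspace (powI mul br I k).
Proof. by case: k => [|k] //= _; apply: sumS_subspace; apply: span_subspace. Qed.

Lemma powD_subspace I k : subspace I -> subspace (powD mul br I k).
Proof. by case: k => [|k] //= _; apply: sumS_subspace; apply: span_subspace. Qed.

Lemma powI_mono I J k : subS I J -> subS (powI mul br I k) (powI mul br J k).
Proof.
move=> IJ; elim: k => [|k IHk] //=; apply: sumS_mono; last exact: prodS_mono.
by apply: brS_mono => -[|[|j]].
Qed.

Section PowerOfIdeal.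
Variables (N : V -> Prop) (j : nat).
Hypotheses (hN : ideal mul br N) (hNj : ideal mul br (powI mul br N j)).
Local Notation A := (powI mul br N j).
Local Notation B := (powI mul br N j.+1).

Lemma powIS_subspace : subspace B.
Proof. by apply: sumS_subspace; apply: span_subspace. Qed.

Lemma powIS_br_gen g : A (g ord0) -> N (g slot1) -> B (br g).
Proof.
move=> Ag0 Ng1; apply: sumSl; first exact: span_subspace.
apply: brS_gen => k; case: ifP => [/eqP k0 | _].
  by rewrite (_ : k = ord0) //; apply: val_inj.
by case: ifP => // /eqP k1; rewrite (_ : k = slot1) //; apply: val_inj.
Qed.

Lemma powIS_mul_gen u v : A u -> N v -> B (mul u v).
Proof. by move=> Au Nv; apply: sumSr; [exact: span_subspace | apply: prodS_gen]. Qed.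

Lemma powIS_mull p v : B v -> B (mul p v).
Proof.
have sB := powIS_subspace.
move=> [u [w [Bu Pw ->]]]; rewrite pmulDr; apply: subspaceD => //.
  apply: (span_min (subspace_pmul_preim p sB) _ Bu) => _ [g [Ag ->]].
  have -> : mul p (br g) =
      br (updn g 0 (mul p (g ord0))) - mul (g ord0) (br (updn g 0 p)).
    by rewrite br_leibniz (updn_id g ord0) addrK.
  apply: subspaceD => //.
    apply: powIS_br_gen; rewrite updnE /=; last exact: (Ag slot1).
    by apply: (ideal_mull _ hNj); exact: (Ag ord0).
  apply: subspaceN => //; apply: powIS_mul_gen; first exact: (Ag ord0).
  by apply: (@ideal_br N _ slot1) => //; rewrite updnE /=; exact: (Ag slot1).
apply: (span_min (subspace_pmul_preim p sB) _ Pw) => _ [a [b [Aa Nb ->]]].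
by rewrite pmulA; apply: powIS_mul_gen => //; apply: ideal_mull.
Qed.

Lemma powIS_br f : B (f ord0) -> B (br f).
Proof.
have sB := powIS_subspace.
case=> u [w [Bu Pw e]]; rewrite -(updn_id f ord0) e brD; apply: subspaceD => //.
  apply: (span_min (subspace_br_preim f ord0 sB) _ Bu) => _ [g [Ag ->]].
  (* with [br g] in the last slot, the fundamental identity distributes the
     outer bracket over the slots of [g], each of which stays in its ideal *)
  rewrite br_swap_first_last br_fundamental; apply: subspaceN => //.
  apply: (big_ind B) => [|u' v'|i _]; [exact: subspace0 | exact: subspaceD |].
  by apply: powIS_br_gen; apply: ideal_updn_br => //; [exact: (Ag ord0) | exact: (Ag slot1)].
apply: (span_min (subspace_br_preim f ord0 sB) _ Pw) => _ [a [b [Aa Nb ->]]].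
rewrite br_leibniz [mul b _]pmulC; apply: subspaceD => //; apply: powIS_mul_gen => //.
  by apply: (@ideal_br N _ ord0); rewrite ?updnE.
by apply: (@ideal_br A _ ord0); rewrite ?updnE.
Qed.

End PowerOfIdeal.

Lemma powI_ideal N j : ideal mul br N -> ideal mul br (powI mul br N j).
Proof.
move=> hN; elim: j => [|j hNj] //.
by apply: idealP; [exact: powIS_subspace | exact: powIS_mull | exact: powIS_br].
Qed.

Definition derived_step I X : V -> Prop :=
  sumS (brS br (fun k => if k == 0%N then X else I)) (prodS mul X I).

Lemma powDS I k : powD mul br I k.+1 = derived_step I (powD mul br I k).
Proof. by []. Qed.

Lemma derived_step_subspace I X : subspace (derived_step I X).
Proof. by apply: sumS_subspace; apply: span_subspace. Qed.

Lemma derived_step_mono I X Y : subS X Y -> subS (derived_step I X) (derived_step I Y).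
Proof.
move=> XY; apply: sumS_mono; last exact: prodS_mono.
by apply: brS_mono => -[|k].
Qed.

Lemma derived_step_subl I X : ideal mul br I -> subS (derived_step I X) I.
Proof.
move=> hI; apply: sumS_min; first exact: ideal_subspace.
  apply: brS_min; first exact: ideal_subspace.
  by move=> f If; apply: (@ideal_br I f slot1) => //; exact: (If slot1).
by apply: prodS_min; [exact: ideal_subspace | move=> u v _; apply: ideal_mull].
Qed.

Lemma derived_step_subr I X K : ideal mul br K -> subS X K -> subS (derived_step I X) K.
Proof.
move=> hK XK; apply: sumS_min; first exact: ideal_subspace.
  apply: brS_min; first exact: ideal_subspace.
  by move=> f Xf; apply: (@ideal_br K f ord0) => //; apply/XK/(Xf ord0).
by apply: prodS_min; [exact: ideal_subspace | move=> u v /XK Ku _; apply: ideal_mulr].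
Qed.

Lemma br_sumS_expand (A B : 'I_n -> V -> Prop) W :
  subspace W -> (forall i, subspace (A i)) -> (forall i, subspace (B i)) ->
  (forall g i, A i (g i) -> (forall k, sumS (A k) (B k) (g k)) -> W (br g)) ->
  (forall g, (forall i, B i (g i)) -> W (br g)) ->
  forall f, (forall i, sumS (A i) (B i) (f i)) -> W (br f).
Proof.
move=> sW sA sB WA WB.
suff expand m f : (forall i, sumS (A i) (B i) (f i)) ->
    (forall i : 'I_n, (m <= i)%N -> B i (f i)) -> W (br f).
  by move=> f ABf; apply: (expand n) => // i; rewrite leqNgt ltn_ord.
elim: m f => [|m IHm] f ABf Bf; first by apply: WB => i; apply: Bf.
have [mn | nm] := ltnP m n; last first.
  by apply: IHm => // i; rewrite leqNgt (leq_trans (ltn_ord i) nm).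
pose i := Ordinal mn; have [a [b [Aa Bb e]]] := ABf i.
have ABupd v : sumS (A i) (B i) v -> forall k, sumS (A k) (B k) (updn f i v k).
  by move=> ABv k; rewrite updnE; case: eqP => [/val_inj -> | _].
rewrite -(updn_id f i) e brD; apply: subspaceD => //.
  apply: (WA _ i); first by rewrite updnE eqxx.
  by apply: ABupd; apply: sumSl.
apply: IHm; first by apply: ABupd; apply: sumSr.
move=> k mk; rewrite updnE; case: eqP => [/val_inj -> // | /eqP nki].
by apply: Bf; rewrite ltn_neqAle mk andbT eq_sym.
Qed.

Definition absorbs N K L : Prop :=
  (forall f (i : 'I_n), val i != 0%N -> K (f ord0) -> N (f i) -> L (br f)) /\
  (forall u v, K u -> N v -> L (mul u v)).

Lemma derived_step_sumS N J K L X Z :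
    ideal mul br N -> ideal mul br J -> ideal mul br L -> subspace Z -> subS Z K ->
    absorbs N K L -> subS X (sumS Z L) ->
  subS (derived_step (sumS N J) X) (sumS (derived_step J Z) L).
Proof.
move=> hN hJ hL sZ ZK [brKN mulKN] XZL.
have sL := ideal_subspace hL; have sD := derived_step_subspace J Z.
have sW : subspace (sumS (derived_step J Z) L) by apply: sumS_subspace.
apply: sumS_min => //.
  apply: brS_min => // f NJf; have [z [y [Zz Ly e]]] := XZL _ (NJf ord0).
  rewrite -(updn_id f ord0) e brD; apply: subspaceD => //; last first.
    by apply: sumSr => //; apply: (@ideal_br L _ ord0); rewrite ?updnE.
  (* slot 0 holds [z = 0 + z], so it contributes only to the pure [J]-part *)
  pose A (i : 'I_n) := if val i == 0%N then (fun v => v = 0) else N.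
  pose B (i : 'I_n) := if val i == 0%N then Z else J.
  apply: (@br_sumS_expand A B) => //.
  - move=> i; rewrite /A; case: ifP => _; last exact: ideal_subspace.
    by split=> // a _ _ -> ->; rewrite scaler0 addr0.
  - by move=> i; rewrite /B; case: ifP => _ //; exact: ideal_subspace.
  - move=> g i; rewrite /A; case: ifP => [_ gi0 _ | /negbT i0 Ngi ABg].
      by rewrite -(updn_id g i) gi0 br0; apply: subspace0.
    apply: sumSr => //; apply: (brKN g i i0) => //.
    by have [_ [z' [-> Zz' ->]]] := ABg ord0; rewrite add0r; apply: ZK.
  - move=> g Bg; apply: sumSl => //; apply: sumSl; first exact: span_subspace.
    exact: brS_gen.
  move=> k; rewrite /A /B updnE; case: ifP => [_ | k0]; first by exists 0, z; rewrite add0r.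
  by have := NJf k; rewrite k0.
apply: prodS_min => // u p /XZL [z [y [Zz Ly ->]]] [a [b [Na Jb ->]]].
rewrite pmulDl !pmulDr; apply: subspaceD => //; apply: subspaceD => //.
- by apply: sumSr => //; apply: mulKN => //; apply: ZK.
- by apply: sumSl => //; apply: sumSr; [exact: span_subspace | apply: prodS_gen].
- by apply: sumSr => //; apply: ideal_mulr.
- by apply: sumSr => //; apply: ideal_mulr.
Qed.

Lemma powD_sumS_absorbs N J K L m t :
    ideal mul br N -> ideal mul br J -> ideal mul br K -> ideal mul br L ->
    absorbs N K L -> is_zero (powD mul br J t) ->
    subS (powD mul br (sumS N J) m) K ->
  subS (powD mul br (sumS N J) (m + t.+1)) L.
Proof.
move=> hN hJ hK hL NKL Jt0 IK; set I := sumS N J.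
have sI : subspace I by apply: ideal_subspace; apply: sumS_ideal.
have sL := ideal_subspace hL.
have shift k : exists Z, [/\ subspace Z, subS Z K, subS Z (powD mul br J k)
    & subS (powD mul br I (m + k.+1)) (sumS Z L)].
  elim: k => [|k [Z [sZ ZK ZJ IZL]]].
    exists (derived_step J (powD mul br I m)); split.
    - exact: derived_step_subspace.
    - exact: derived_step_subr.
    - exact: derived_step_subl.
    - rewrite addn1 powDS; apply: (@derived_step_sumS N J K) => //.
        exact: powD_subspace.
      exact: sumSl.
  exists (derived_step J Z); split.
  - exact: derived_step_subspace.
  - exact: derived_step_subr.
  - by rewrite powDS; apply: derived_step_mono.
  - by rewrite addnS powDS; apply: (@derived_step_sumS N J K).
have [Z [_ _ ZJ IZL]] := shift t.
by move=> _ /IZL [z [y [/ZJ/Jt0 -> Ly ->]]]; rewrite add0r.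
Qed.

Lemma absorbs_ideal N I : ideal mul br N -> absorbs N I N.
Proof.
move=> hN; split=> [f i _ _ Nfi | u v _ Nv]; first exact: (@ideal_br N f i).
exact: ideal_mull.
Qed.

Lemma absorbs_powI N j : absorbs N (powI mul br N j) (powI mul br N j.+1).
Proof.
split=> [f i i0 Af0 Nfi | u v Au Nv]; last exact: powIS_mul_gen.
case: (eqVneq i slot1) Nfi => [-> | ni1 Nfi]; first exact: powIS_br_gen.
rewrite -[br f]opprK -(br_swap f ni1); apply: subspaceN; first exact: powIS_subspace.
by apply: powIS_br_gen; rewrite !updnE //= eq_sym (negbTE i0).
Qed.

Lemma powD_sumS_sub_powI N J t j :
    ideal mul br N -> ideal mul br J -> is_zero (powD mul br J t) ->
  exists m, subS (powD mul br (sumS N J) m) (powI mul br N j).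
Proof.
move=> hN hJ Jt0; have hI := sumS_ideal hN hJ.
elim: j => [|j [m INj]].
  exists (0 + t.+1); apply: (@powD_sumS_absorbs N J (sumS N J)) => //.
  exact: absorbs_ideal.
exists (m + t.+1); apply: (@powD_sumS_absorbs N J (powI mul br N j)) => //.
- exact: powI_ideal.
- exact: powI_ideal.
- exact: absorbs_powI.
Qed.

Lemma sumS_nilpotent_subalgebra N J :
    nilpotent_ideal mul br N -> ideal mul br J -> nilpotent_subalgebra mul br J ->
  nilpotent_subalgebra mul br (sumS N J).
Proof.
move=> [hN [s Ns0]] hJ [t Jt0]; have [m INs] := powD_sumS_sub_powI s hN hJ Jt0.
exists m => v; split=> [/INs/Ns0 // | ->].
by apply: subspace0; apply: powD_subspace; apply: ideal_subspace; apply: sumS_ideal.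
Qed.

Lemma nilpotent_ideal_sub I J :
  ideal mul br J -> subS J I -> nilpotent_ideal mul br I -> nilpotent_ideal mul br J.
Proof.
move=> hJ JI [_ [s Is0]]; split=> //; exists s => v.
split=> [/(powI_mono JI)/Is0 // | ->].
by apply: subspace0; apply: powI_subspace; apply: ideal_subspace.
Qed.

Lemma sumS_hypo_nilpotent N J :
  nilpotent_ideal mul br N -> hypo_nilpotent mul br J -> hypo_nilpotent mul br (sumS N J).
Proof.
move=> nilN [hJ nsJ notnilJ]; have [hN _] := nilN.
split; [exact: sumS_ideal | exact: sumS_nilpotent_subalgebra |].
move=> nilI; apply/notnilJ/(nilpotent_ideal_sub hJ _ nilI).
by apply/sumSr/ideal_subspace.
Qed.

End PoissonNLieAlgebra.

Theorem proposition5p15 (F : fieldType) (V : lmodType F) (n : nat)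
  (mul : V -> V -> V) (br : {ffun 'I_n -> V} -> V) :
  (2 <= n)%N ->
  poisson_nlie mul br ->
  forall N J : V -> Prop,
    is_Nil mul br N ->
    max_hypo_nilpotent mul br J ->
    subS N J.
Proof.
case: n mul br => [|[|n']] // mul br _ HP N J [nilN _] [hypJ maxJ] v Nv.
have [[hN _] [hJ _ _]] := (nilN, hypJ).
apply: (maxJ _ (sumS_hypo_nilpotent HP nilN hypJ)).
  exact/sumSr/(ideal_subspace hN).
exact: sumSl (ideal_subspace hJ) _ Nv.
Qed.
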